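(* Let $X_1,\dots,X_n$ be features and $Y$ a target that is not a.s. constant, $\mathcal{F}=\{1,\dots,n\}$. Then for every $i\in\mathcal{F}$, $$\frac{\mathrm{Dep}(X_i,Y)}{n}\le \mathrm{FI}(i)\le \mathrm{Dep}(\mathcal{F},Y).$$
   Context: All random variables are discrete with finite support and defined on a common probability space. For discrete random variables (or random vectors) $X$ and $Y$, define $$\mathrm{UD}(X,Y):=\sum_x p_X(x)\sum_y \bigl|p_{Y\mid X=x}(y)-p_Y(y)\bigr|,$$ and, when $Y$ is not almost surely constant, $\mathrm{Dep}(X,Y):=\mathrm{UD}(X,Y)/\mathrm{UD}(Y,Y)$. Given features $X_1,\dots,X_n$ with index set $\mathcal{F}=\{1,\dots,n\}$ and $S\subseteq\mathcal{F}$, write $X_S=(X_i)_{i\in S}$ ($X_\emptyset$ constant) and $\mathrm{Dep}(S,Y):=\mathrm{Dep}(X_S,Y)$. The Berkelmans–Pries feature importance is $$\mathrm{FI}(i):=\sum_{S\subseteq\mathcal{F}\setminus\{i\}}\frac{|S|!\,(n-|S|-1)!}{n!}\bigl(\mathrm{Dep}(S\cup\{i\},Y)-\mathrm{Dep}(S,Y)\bigr).$$ *)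

From HB Require Import structures.
From mathcomp Require Import all_boot all_order all_algebra.
Set Implicit Arguments. Unset Strict Implicit. Unset Printing Implicit Defensive.
Import Order.TTheory GRing.Theory Num.Theory.
Local Open Scope ring_scope.

Definition is_prob (R : realFieldType) (Omega : finType) (P : {ffun Omega -> R}) : Prop :=
  (forall w, 0 <= P w) /\ \sum_(w : Omega) P w = 1.

Section Dep.
Variables (R : realFieldType) (Omega : finType) (P : {ffun Omega -> R}).

Definition pmf (A : eqType) (X : Omega -> A) (x : A) : R :=
  \sum_(w : Omega | X w == x) P w.

Definition pmf2 (A B : eqType) (X : Omega -> A) (Y : Omega -> B) (x : A) (y : B) : R :=
  \sum_(w : Omega | (X w == x) && (Y w == y)) P w.

Definition vals (A : eqType) (X : Omega -> A) : seq A := undup [seq X w | w <- enum Omega].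

Definition cond_pmf (A B : eqType) (X : Omega -> A) (Y : Omega -> B) (x : A) (y : B) : R :=
  pmf2 X Y x y / pmf X x.

Definition UD (A B : eqType) (X : Omega -> A) (Y : Omega -> B) : R :=
  \sum_(x <- vals X) pmf X x *
     \sum_(y <- vals Y) `| cond_pmf X Y x y - pmf Y y |.

Definition Dep (A B : eqType) (X : Omega -> A) (Y : Omega -> B) : R :=
  UD X Y / UD Y Y.

Definition as_constant (B : eqType) (Y : Omega -> B) : Prop :=
  exists y : B, pmf Y y = 1.

Variables (n : nat) (T : 'I_n -> eqType) (X : forall i : 'I_n, Omega -> T i).

Definition XS (S : {set 'I_n}) (w : Omega) : seq {i : 'I_n & T i} :=
  [seq Tagged T (X i w) | i <- enum S].

Definition DepS (B : eqType) (S : {set 'I_n}) (Y : Omega -> B) : R := Dep (XS S) Y.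

Definition FI (B : eqType) (Y : Omega -> B) (i : 'I_n) : R :=
  \sum_(S : {set 'I_n} | i \notin S)
     ((#|S|`! * (n - #|S| - 1)`!)%:R / (n`!)%:R) *
     (DepS (i |: S) Y - DepS S Y).

End Dep.

From HB Require Import structures.
From mathcomp Require Import all_boot all_order all_algebra.
From mathcomp Require Import lra.
Set Implicit Arguments. Unset Strict Implicit. Unset Printing Implicit Defensive.
Import Order.TTheory GRing.Theory Num.Theory.
Local Open Scope ring_scope.

(* Writing p_X(x) (p_{Y|X=x}(y) - p_Y(y)) as a sum over the fibre {X = x} of
   the centred quantity P(w) ([Y w = y] - p_Y(y)) shows that UD(X,Y) is, for
   each y, the l1-norm of this quantity aggregated over the partition of Omega
   induced by X.  Refining the partition can only increase an l1-norm, so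
   Dep(S,Y) is monotone in S; it vanishes at S = {} and is nonnegative.
   FI(i) is a convex combination of the nonnegative increments
   Dep(S u {i},Y) - Dep(S,Y) <= Dep(F,Y), which gives the upper bound; the
   term S = {} alone has weight 1/n and equals Dep({i},Y)/n >= Dep(X_i,Y)/n. *)

Section UD.
Variables (R : realFieldType) (Omega : finType) (P : {ffun Omega -> R}).
Hypothesis P_ge0 : forall w, 0 <= P w.

Lemma sum_over_vals (A : eqType) (X : Omega -> A) (F : Omega -> R) :
  \sum_w F w = \sum_(x <- vals X) \sum_(w | X w == x) F w.
Proof.
under [RHS]eq_bigr => x _ do rewrite big_mkcond.
rewrite exchange_big /=; apply: eq_bigr => w _.
have Xw_vals : X w \in vals X by rewrite mem_undup; apply: map_f; rewrite mem_enum.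
rewrite (bigD1_seq (X w) Xw_vals (undup_uniq _)) /= eqxx big1 ?addr0 //.
by move=> x; rewrite eq_sym => /negbTE ->.
Qed.

Lemma sum_norm_fibres_signE (A : eqType) (X : Omega -> A) (g : Omega -> R) :
  \sum_(x <- vals X) `|\sum_(w | X w == x) g w| =
  \sum_w (if 0 <= \sum_(v | X v == X w) g v then 1 else -1) * g w.
Proof.
rewrite (sum_over_vals X); apply: eq_bigr => x _.
rewrite [RHS](eq_bigr (fun w => (if 0 <= \sum_(v | X v == x) g v then 1 else -1) * g w));
  last by move=> w /eqP ->.
rewrite -mulr_sumr; case: ifP => [sum_ge0|sum_lt0]; first by rewrite mul1r ger0_norm.
by rewrite mulN1r ltr0_norm // ltNge sum_lt0.
Qed.

Lemma sum_fibrewise_contraction_le (A : eqType) (X : Omega -> A) (c g : Omega -> R) :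
  (forall w, `|c w| <= 1) -> (forall w1 w2, X w1 = X w2 -> c w1 = c w2) ->
  \sum_w c w * g w <= \sum_(x <- vals X) `|\sum_(w | X w == x) g w|.
Proof.
move=> c_le1 c_fibre; rewrite (sum_over_vals X); apply: ler_sum => x _.
have [w0 /eqP Xw0|fibre0] := pickP (fun w => X w == x); last first.
  by rewrite big_pred0.
rewrite (eq_bigr (fun w => c w0 * g w)); last first.
  by move=> w /eqP Xw; rewrite (c_fibre w w0) // Xw Xw0.
rewrite -mulr_sumr; apply: le_trans (ler_norm _) _.
by rewrite normrM ler_piMl.
Qed.

Lemma pmf_ge0 (A : eqType) (X : Omega -> A) x : 0 <= pmf P X x.
Proof. exact: sumr_ge0. Qed.

Lemma pmf2_ge0 (A B : eqType) (X : Omega -> A) (Y : Omega -> B) x y :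
  0 <= pmf2 P X Y x y.
Proof. exact: sumr_ge0. Qed.

Lemma pmf2_le_pmf (A B : eqType) (X : Omega -> A) (Y : Omega -> B) x y :
  pmf2 P X Y x y <= pmf P X x.
Proof.
rewrite /pmf2 /pmf [leLHS]big_mkcond [leRHS]big_mkcond /=.
by apply: ler_sum => w _; case: (X w == x); case: (Y w == y).
Qed.

Definition centred_ind (B : eqType) (Y : Omega -> B) (y : B) (w : Omega) : R :=
  P w * ((Y w == y)%:R - pmf P Y y).

Lemma pmf2_subM_pmf (A B : eqType) (X : Omega -> A) (Y : Omega -> B) x y :
  pmf2 P X Y x y - pmf P X x * pmf P Y y = \sum_(w | X w == x) centred_ind Y y w.
Proof.
rewrite /centred_ind /pmf2 /pmf mulr_suml.
under [RHS]eq_bigr => w _ do rewrite mulrBr.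
rewrite sumrB; congr (_ - _).
rewrite [RHS]big_mkcond [LHS]big_mkcond; apply: eq_bigr => w _.
by case: (X w == x); case: (Y w == y); rewrite /= ?mulr1 ?mulr0.
Qed.

Lemma UDE (A B : eqType) (X : Omega -> A) (Y : Omega -> B) :
  UD P X Y =
  \sum_(y <- vals Y) \sum_(x <- vals X) `|\sum_(w | X w == x) centred_ind Y y w|.
Proof.
rewrite /UD; under eq_bigr => x _ do rewrite mulr_sumr.
rewrite exchange_big /=; apply: eq_bigr => y _; apply: eq_bigr => x _.
rewrite -pmf2_subM_pmf /cond_pmf.
have [pX0|pX_neq0] := eqVneq (pmf P X x) 0.
  have pXY0 : pmf2 P X Y x y = 0.
    by apply/eqP; rewrite eq_le pmf2_ge0 andbT -pX0 pmf2_le_pmf.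
  by rewrite pX0 pXY0 !mul0r subr0 normr0.
rewrite -[X in X * _]ger0_norm ?pmf_ge0 // -normrM.
by rewrite mulrBr mulrCA mulfV // mulr1.
Qed.

Lemma UD_ge0 (A B : eqType) (X : Omega -> A) (Y : Omega -> B) : 0 <= UD P X Y.
Proof. by rewrite UDE; do 2![apply: sumr_ge0 => ? _]. Qed.

Lemma UD_le_finer (A A' B : eqType) (X : Omega -> A) (X' : Omega -> A')
    (Y : Omega -> B) :
  (forall w1 w2, X' w1 = X' w2 -> X w1 = X w2) -> UD P X Y <= UD P X' Y.
Proof.
move=> X_of_X'; rewrite !UDE; apply: ler_sum => y _.
rewrite sum_norm_fibres_signE; apply: sum_fibrewise_contraction_le.
  by move=> w; case: ifP; rewrite ?normrN normr1.
by move=> w1 w2 /X_of_X' ->.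
Qed.

Lemma UD_cst (A B : eqType) (X : Omega -> A) (Y : Omega -> B) (c : A) :
  \sum_w P w = 1 -> (forall w, X w = c) -> UD P X Y = 0.
Proof.
move=> P_sum1 Xc; rewrite UDE; apply: big1 => y _; apply: big1 => x _.
rewrite (eq_bigl (fun=> c == x)) => [|w]; last by rewrite Xc.
have [c_eq_x|c_neq_x] := eqVneq c x; last by rewrite big_pred0 ?normr0.
rewrite (eq_bigl xpredT) ?c_eq_x // /centred_ind.
under eq_bigr do rewrite mulrBr.
rewrite sumrB -mulr_suml P_sum1 mul1r /pmf [X in _ - X]big_mkcond /=.
rewrite -sumrB big1 ?normr0 // => w _.
by case: (Y w == y); rewrite ?mulr1 ?mulr0 subrr.
Qed.

Lemma Dep_ge0 (A B : eqType) (X : Omega -> A) (Y : Omega -> B) : 0 <= Dep P X Y.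
Proof. by rewrite /Dep divr_ge0 ?UD_ge0. Qed.

Lemma Dep_le_finer (A A' B : eqType) (X : Omega -> A) (X' : Omega -> A')
    (Y : Omega -> B) :
  (forall w1 w2, X' w1 = X' w2 -> X w1 = X w2) -> Dep P X Y <= Dep P X' Y.
Proof.
by move=> X_of_X'; rewrite /Dep ler_wpM2r ?invr_ge0 ?UD_ge0 ?UD_le_finer.
Qed.

End UD.

Section Features.
Variables (R : realFieldType) (Omega : finType) (P : {ffun Omega -> R}).
Variables (n : nat) (T : 'I_n -> eqType) (X : forall i : 'I_n, Omega -> T i).
Variables (B : eqType) (Y : Omega -> B).
Hypothesis P_prob : is_prob P.
Let P_ge0 : forall w, 0 <= P w := proj1 P_prob.

Lemma XS_subset (S S' : {set 'I_n}) : S \subset S' ->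
  forall w1 w2, XS X S' w1 = XS X S' w2 -> XS X S w1 = XS X S w2.
Proof.
move=> /subsetP sSS' w1 w2 /eq_in_map XS'_eq; apply/eq_in_map => j.
by rewrite mem_enum => /sSS' jS'; apply: XS'_eq; rewrite mem_enum.
Qed.

Lemma XS1 (i : 'I_n) w1 w2 : XS X [set i] w1 = XS X [set i] w2 -> X i w1 = X i w2.
Proof.
rewrite /XS enum_set1 => -[eq_tagged].
by have := congr1 (tagged_as (Tagged T (X i w1))) eq_tagged; rewrite !tagged_asE.
Qed.

Lemma DepS_ge0 (S : {set 'I_n}) : 0 <= DepS P X S Y.
Proof. exact: (Dep_ge0 P_ge0). Qed.

Lemma DepS_subset (S S' : {set 'I_n}) :
  S \subset S' -> DepS P X S Y <= DepS P X S' Y.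
Proof. by move=> sSS'; apply/(Dep_le_finer P_ge0)/XS_subset. Qed.

Lemma DepS_set0 : DepS P X set0 Y = 0.
Proof.
rewrite /DepS /Dep (UD_cst P_ge0 _ (proj2 P_prob) (c := [::])) ?mul0r // => w.
by rewrite /XS enum_set0.
Qed.

Lemma Dep_le_DepS1 (i : 'I_n) : Dep P (X i) Y <= DepS P X [set i] Y.
Proof. exact/(Dep_le_finer P_ge0)/XS1. Qed.

End Features.

Definition shapley_weight (R : realFieldType) (n k : nat) : R :=
  (k`! * (n - k - 1)`!)%:R / (n`!)%:R.

Lemma shapley_weight_ge0 (R : realFieldType) n k : 0 <= shapley_weight R n k.
Proof. by rewrite divr_ge0 ?ler0n. Qed.

Lemma shapley_weight0 (R : realFieldType) n : (0 < n)%N -> shapley_weight R n 0 = n%:R^-1.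
Proof.
case: n => // m _; rewrite /shapley_weight mul1n subn0 subn1 factS natrM invfM.
by rewrite mulrCA mulfV ?mulr1 // pnatr_eq0 -lt0n fact_gt0.
Qed.

Lemma sum_bin_fact_shapley (m : nat) :
  (\sum_(k < m.+2) 'C(m, k) * (k`! * (m.+1 - k - 1)`!))%N = m.+1`!.
Proof.
rewrite big_ord_recr /= bin_small // mul0n addn0 factS.
rewrite (eq_bigr (fun=> m`!)) => [|k _]; first by rewrite sum_nat_const card_ord.
have le_km : (k <= m)%N by rewrite -ltnS.
by rewrite subn1 subSn // bin_fact.
Qed.

(* Sets of each size k avoiding i are counted by 'C(n - 1, k). *)
Lemma sum_shapley_weight (R : realFieldType) n (i : 'I_n) :
  \sum_(S : {set 'I_n} | i \notin S) shapley_weight R n #|S| = 1.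
Proof.
have card_lt (S : {set 'I_n}) : (#|S| < n.+1)%N.
  by rewrite ltnS -[leqRHS]card_ord max_card.
rewrite -mulr_suml -natr_sum.
suff -> : (\sum_(S : {set 'I_n} | i \notin S) (#|S|`! * (n - #|S| - 1)`!))%N = n`!.
  by rewrite mulfV // pnatr_eq0 -lt0n fact_gt0.
rewrite (partition_big (fun S : {set 'I_n} => Ordinal (card_lt S)) xpredT) //=.
case: n i card_lt => [[]//|m] i card_lt; rewrite -sum_bin_fact_shapley.
apply: eq_bigr => k _.
rewrite (eq_bigr (fun _ => k`! * (m.+1 - k - 1)`!)%N); last by move=> S /andP[_ /eqP <-].
rewrite sum_nat_const; congr (_ * _)%N.
have card_setC1 : #|[set~ i]| = m by rewrite cardsC1 card_ord.
rewrite -[X in 'C(X, _)]card_setC1 -cards_draws.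
apply: eq_card => S; rewrite unfold_in inE -(inj_eq val_inj) /=.
by rewrite subsetC sub1set inE.
Qed.

Lemma FI_shapleyE (R : realFieldType) (Omega : finType) (P : {ffun Omega -> R})
    (n : nat) (T : 'I_n -> eqType) (X : forall i : 'I_n, Omega -> T i)
    (B : eqType) (Y : Omega -> B) (i : 'I_n) :
  FI P X Y i = \sum_(S : {set 'I_n} | i \notin S)
    shapley_weight R n #|S| * (DepS P X (i |: S) Y - DepS P X S Y).
Proof. by []. Qed.

Theorem mainTheorem5 (R : realFieldType) (Omega : finType) (P : {ffun Omega -> R})
  (n : nat) (T : 'I_n -> eqType) (X : forall i : 'I_n, Omega -> T i)
  (B : eqType) (Y : Omega -> B) :
  is_prob P -> ~ as_constant P Y ->
  forall i : 'I_n,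
    Dep P (X i) Y / n%:R <= FI P X Y i /\ FI P X Y i <= DepS P X [set: 'I_n] Y.
Proof.
move=> P_prob _ i; rewrite FI_shapleyE.
have incr_ge0 (S : {set 'I_n}) : 0 <= DepS P X (i |: S) Y - DepS P X S Y.
  by rewrite subr_ge0 DepS_subset ?subsetUr.
split.
  rewrite (bigD1 set0) ?inE //= setU0 cards0 shapley_weight0 ?(leq_trans _ (ltn_ord i)) //.
  rewrite DepS_set0 // subr0 mulrC -[leLHS]addr0 lerD ?ler_wpM2l ?invr_ge0 //.
    exact: Dep_le_DepS1.
  by apply: sumr_ge0 => S _; rewrite mulr_ge0 ?shapley_weight_ge0 ?incr_ge0.
rewrite -[leRHS]mul1r -(sum_shapley_weight R i) mulr_suml.
apply: ler_sum => S _; rewrite ler_wpM2l ?shapley_weight_ge0 //.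
have := DepS_subset X Y P_prob (subsetT (i |: S)); have := DepS_ge0 X Y P_prob S.
lra.
Qed.
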